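(* Let $G$ be a group with identity $e$, $A$ a finite set with $|A|\ge2$, and $S\subseteq G$ a finite subset with $e\in S$ and $|S|\ge3$. Suppose $(\mathcal P,f)$ generates a local map $\mu:A^S\to A$, with $f$ well-behaved and $|\mathcal P|=|A|$. Then $\mathrm{mms}(\mu)=S\setminus\{s\}$ for some $s\in S\setminus\{e\}$, or $\mathrm{mms}(\mu)=S$.
   Context: $A^S$ is the set of functions $S\to A$. A local map $\mu:A^S\to A$ defines the cellular automaton $\tau:A^G\to A^G$, $\tau(x)(g)=\mu((g^{-1}\cdot x)|_S)$, where $(g\cdot x)(h)=x(g^{-1}h)$. A finite $T\subseteq G$ is a memory set of $\tau$ if some local map $A^T\to A$ defines $\tau$; $\mathrm{mms}(\mu)$ is the intersection of all memory sets of the cellular automaton defined by $\mu$. The pair $(\mathcal P,f)$ generates $\mu$ if $\mathcal P=\{z\in A^S:\mu(z)\neq z(e)\}$ and $f:\mathcal P\to A$ is the restriction of $\mu$ to $\mathcal P$. The function $f$ is well-behaved if for all $p,q\in\mathcal P$: $p(e)=q(e)$ if and only if $f(p)=f(q)$. *)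

From Stdlib Require List.
From mathcomp Require Import all_boot.
Set Implicit Arguments. Unset Strict Implicit. Unset Printing Implicit Defensive.

Record group := Group {
  gcarrier :> Type;
  gmul : gcarrier -> gcarrier -> gcarrier;
  ginv : gcarrier -> gcarrier;
  gone : gcarrier;
  gmulA : forall x y z, gmul x (gmul y z) = gmul (gmul x y) z;
  gmul1l : forall x, gmul gone x = x;
  gmul1r : forall x, gmul x gone = x;
  gmulVl : forall x, gmul (ginv x) x = gone;
  gmulVr : forall x, gmul x (ginv x) = gone
}.

Section CA.
Variables (G : group) (A : finType).

(* Subsets of G are predicates; A^T is the type of functions T -> A. *)
Definition gset := G -> Prop.
Definition pat (T : gset) := {g : G | T g} -> A.

Definition finite_gset (T : gset) : Prop :=
  exists l : list G, forall g, T g <-> List.In g l.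

Definition restr (T : gset) (x : G -> A) : pat T := fun t => x (proj1_sig t).

Definition act (g : G) (x : G -> A) : G -> A := fun h => x (gmul (ginv g) h).

Definition CA_of (T : gset) (mu : pat T -> A) : (G -> A) -> (G -> A) :=
  fun x g => mu (@restr T (act (ginv g) x)).

Definition memory_set (tau : (G -> A) -> (G -> A)) (T : gset) : Prop :=
  finite_gset T /\ exists nu : pat T -> A, forall x g, tau x g = CA_of nu x g.

Definition mms (S : gset) (mu : pat S -> A) : gset :=
  fun g => forall T, memory_set (CA_of mu) T -> T g.

(* (P, f) generates mu (requires e in S to evaluate z(e)) *)
Definition generates (S : gset) (He : S (gone G)) (mu : pat S -> A)
  (P : pat S -> Prop) (f : {z : pat S | P z} -> A) : Prop :=
  (forall z, P z <-> mu z <> z (exist _ (gone G) He)) /\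
  (forall z (Hz : P z), f (exist _ z Hz) = mu z).

Definition well_behaved (S : gset) (He : S (gone G))
  (P : pat S -> Prop) (f : {z : pat S | P z} -> A) : Prop :=
  forall p q : {z : pat S | P z},
    proj1_sig p (exist _ (gone G) He) = proj1_sig q (exist _ (gone G) He)
    <-> f p = f q.

Definition same_card_as_A (X : Type) (P : X -> Prop) : Prop :=
  exists h : {x : X | P x} -> A, bijective h.

Definition at_least_3 (S : gset) : Prop :=
  exists a b c : G, [/\ S a, S b & S c] /\ [/\ a <> b, a <> c & b <> c].

End CA.

From mathcomp Require Import all_boot.
From Stdlib Require Import Classical ClassicalEpsilon ProofIrrelevance FunctionalExtensionality.
Set Implicit Arguments. Unset Strict Implicit.

(* The minimal memory set of mu consists exactly of the cells on which mu
   depends.  Every pattern z outside P satisfies mu z = z(e), and P is as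
   small as A.  If mu ignored e, then for the |A|^2 patterns varying freely at
   two further cells, resetting z(e) to a value other than mu z would put
   |A|^2 patterns into P.  If mu ignores some s <> e, the |A| patterns obtained
   from one p in P by varying p(s) all lie in P, hence exhaust P; changing p at
   any other cell s' <> e then leaves P and so changes mu p: mu depends on
   every cell but s. *)

Section SameCard.
Variables (A : finType) (X : Type) (P : X -> Prop).
Hypothesis hcard : same_card_as_A A P.

Lemma same_card_exists (a : A) : exists x, P x.
Proof. by case: hcard => h [h' _ _]; exists (sval (h' a)); exact: svalP. Qed.

Lemma same_card_inj_leq (I : finType) (F : I -> X) :
  (forall i, P (F i)) -> injective F -> #|I| <= #|A|.
Proof.
move=> PF F_inj; case: hcard => h /bij_inj h_inj.
pose F' i : {x | P x} := exist P (F i) (PF i).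
have F'_inj : injective F' by move=> i j /(congr1 sval); exact: F_inj.
exact: leq_card _ (inj_comp h_inj F'_inj).
Qed.

Lemma same_card_inj_onto (F : A -> X) :
  (forall a, P (F a)) -> injective F -> forall x, P x -> exists a, x = F a.
Proof.
move=> PF F_inj x Px; case: hcard => h /bij_inj h_inj.
pose F' a : {x | P x} := exist P (F a) (PF a).
have F'_inj : injective F' by move=> a b /(congr1 sval); exact: F_inj.
have [g _ hFg] := injF_bij (inj_comp h_inj F'_inj).
exists (g (h (exist P x Px))).
by have /h_inj/(congr1 sval) := hFg (h (exist P x Px)).
Qed.

End SameCard.

Lemma card_gt1_exists_neq (A : finType) : 1 < #|A| -> forall x : A, exists y, y != x.
Proof.
case/card_gt1P=> a [b [_ _ nab]] x.
by case: (eqVneq a x) => [<- | nax]; [exists b; rewrite eq_sym | exists a].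
Qed.

Lemma at_least_3_avoid (G : group) (S : gset G) (g0 : G) : at_least_3 S ->
  exists s1 s2, [/\ S s1, S s2, s1 <> g0, s2 <> g0 & s1 <> s2].
Proof.
case=> a [b [c [[Sa Sb Sc] [nab nac nbc]]]].
have [<- | na] := classic (a = g0); first by exists b, c; split=> //; exact: nesym.
have [<- | nb] := classic (b = g0); first by exists a, c; split=> //; exact: nesym.
by exists a, b.
Qed.

Section CellularAutomata.
Variables (G : group) (A : finType).

Lemma ginv_gone : ginv (gone G) = gone G.
Proof. by rewrite -[LHS]gmul1l gmulVr. Qed.

Lemma CA_of_gone (T : gset G) (nu : pat A T -> A) x :
  CA_of nu x (gone G) = nu (restr (T:=T) x).
Proof.
rewrite /CA_of; congr (nu (restr _)); apply: functional_extensionality => h.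
by rewrite /act !ginv_gone gmul1l.
Qed.

Definition pat_ext (a0 : A) (S : gset G) (z : pat A S) : G -> A :=
  fun h => if excluded_middle_informative (S h) is left Sh then z (exist S h Sh) else a0.

Lemma restr_pat_ext a0 S (z : pat A S) : restr (T:=S) (pat_ext a0 z) = z.
Proof.
apply: functional_extensionality => -[h Sh]; rewrite /restr /pat_ext /=.
by case: excluded_middle_informative => // Sh'; rewrite (proof_irrelevance _ Sh' Sh).
Qed.

Lemma finite_gsetD1 (S : gset G) (s : G) :
  finite_gset S -> finite_gset (fun g => S g /\ g <> s).
Proof.
case=> l Sl; pose ns g := if excluded_middle_informative (g = s) then false else true.
exists (List.filter ns l) => g; rewrite List.filter_In -Sl /ns.
by case: excluded_middle_informative; intuition.
Qed.

End CellularAutomata.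

Section Dependence.
Variables (G : group) (A : finType) (S : gset G) (mu : pat A S -> A).

Definition pat_upd (z : pat A S) (s : G) (a : A) : pat A S :=
  fun t => if excluded_middle_informative (sval t = s) is left _ then a else z t.

Lemma pat_upd_at z s a t : sval t = s -> pat_upd z s a t = a.
Proof. by rewrite /pat_upd; case: excluded_middle_informative. Qed.

Lemma pat_upd_off z s a t : sval t <> s -> pat_upd z s a t = z t.
Proof. by rewrite /pat_upd; case: excluded_middle_informative. Qed.

Definition depends_on (g : G) : Prop :=
  exists z z' : pat A S, (forall t, sval t <> g -> z t = z' t) /\ mu z <> mu z'.

Lemma depends_on_mem g : depends_on g -> S g.
Proof.
case=> z [z' [agree ne]]; apply: NNPP => Sg; apply/ne/f_equal.
apply: functional_extensionality => t; apply: agree => tg; apply: Sg.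
by rewrite -tg; exact: svalP.
Qed.

Lemma mu_pat_upd g : ~ depends_on g -> forall z a, mu (pat_upd z g a) = mu z.
Proof.
move=> nd z a; apply: NNPP => ne; apply: nd.
by exists (pat_upd z g a), z; split=> // t; exact: pat_upd_off.
Qed.

Section MinimalMemorySet.
Variable a0 : A.

Lemma mms_depends_on g : depends_on g -> mms mu g.
Proof.
case=> z [z' [agree ne]] T [_ [nu Hnu]]; apply: NNPP => Tg; apply: ne.
have muE w : mu w = CA_of mu (pat_ext a0 w) (gone G) by rewrite CA_of_gone restr_pat_ext.
rewrite (muE z) (muE z') !Hnu !CA_of_gone; congr nu.
apply: functional_extensionality => -[h Th]; rewrite /restr /pat_ext /=.
case: excluded_middle_informative => // Sh; apply: agree => /= hg; apply: Tg.
by rewrite -hg.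
Qed.

Lemma mms_not_depends_on s : finite_gset S -> ~ depends_on s -> ~ mms mu s.
Proof.
move=> Sfin nd Ms; suff [_ []] : S s /\ s <> s by [].
apply: (Ms (fun g => S g /\ g <> s)); split; first exact: finite_gsetD1.
pose nu (w : pat A (fun g => S g /\ g <> s)) : A := mu (fun t =>
  if excluded_middle_informative (sval t = s) is right ne
  then w (exist _ (sval t) (conj (svalP t) ne)) else a0).
(* [nu (restr x)] is, by conversion, [mu] of [restr x] with cell [s] reset to [a0]. *)
by exists nu => x g; rewrite /CA_of -(mu_pat_upd nd _ a0).
Qed.

Lemma mmsE : finite_gset S -> forall g, mms mu g <-> depends_on g.
Proof.
move=> Sfin g; split; last exact: mms_depends_on.
by move=> Mg; apply: NNPP => nd; exact: mms_not_depends_on nd Mg.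
Qed.

End MinimalMemorySet.

Section Counting.
Variables (He : S (gone G)) (P : pat A S -> Prop).
Let e : {g | S g} := exist S (gone G) He.
Hypotheses (hA : 1 < #|A|) (hP : forall z, P z <-> mu z <> z e)
  (hcard : same_card_as_A A P).

Let other (x : A) : A := xchoose (card_gt1_exists_neq hA x).

Let other_neq x : other x != x.
Proof. exact: (xchooseP (card_gt1_exists_neq hA x)). Qed.

Lemma mu_fixed z : ~ P z -> mu z = z e.
Proof. by move=> nPz; apply: NNPP => ne; apply/nPz/hP. Qed.

Lemma depends_on_gone s1 s2 : S s1 -> S s2 ->
  s1 <> gone G -> s2 <> gone G -> s1 <> s2 -> depends_on (gone G).
Proof.
move=> S1 S2 n1 n2 n12; apply: NNPP => nd.
pose L (uv : A * A) : pat A S := pat_upd (fun=> uv.1) s2 uv.2.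
pose F uv := pat_upd (L uv) (gone G) (other (mu (L uv))).
have PF uv : P (F uv).
  apply/hP; rewrite (mu_pat_upd nd) /F pat_upd_at //.
  by apply/eqP; rewrite eq_sym other_neq.
have F1 uv : F uv (exist S s1 S1) = uv.1 by rewrite /F /L !pat_upd_off.
have F2 uv : F uv (exist S s2 S2) = uv.2 by rewrite /F /L pat_upd_off // pat_upd_at.
have F_inj : injective F.
  move=> uv uv' /(congr1 (fun z => (z (exist S s1 S1), z (exist S s2 S2)))).
  by rewrite /= !F1 !F2; case: uv uv' => [? ?] [? ?].
have := same_card_inj_leq hcard PF F_inj; rewrite card_prod.
by rewrite -[X in _ <= X]muln1 leq_pmul2l ?(ltnW hA) // leqNgt hA.
Qed.

Lemma depends_on_other s s' : S s -> s <> gone G -> ~ depends_on s ->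
  S s' -> s' <> gone G -> s' <> s -> depends_on s'.
Proof.
move=> Ss ns nd Ss' ns' ns's.
have [a _] := card_gt0P (ltnW hA).
have [z0 Pz0] := same_card_exists hcard a.
pose t' := exist S s' Ss'.
pose line b := pat_upd z0 s b.
have Pline b : P (line b).
  apply/hP; rewrite (mu_pat_upd nd) /line pat_upd_off /=; first exact/hP.
  exact: nesym.
have line_inj : injective line.
  by move=> b c /(congr1 (fun z => z (exist S s Ss))); rewrite /line !pat_upd_at.
pose z1 := pat_upd z0 s' (other (z0 t')).
have nPz1 : ~ P z1.
  move=> /(same_card_inj_onto hcard Pline line_inj) [b /(congr1 (fun z => z t'))].
  by rewrite /z1 /line pat_upd_at // pat_upd_off // => /eqP; rewrite (negbTE (other_neq _)).
exists z0, z1; split=> [t ts'|]; first by rewrite /z1 pat_upd_off.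
rewrite (mu_fixed nPz1) /z1 pat_upd_off /=; first exact/hP.
exact: nesym.
Qed.

End Counting.
End Dependence.

Theorem mainTheorem10 (G : group) (A : finType) (S : gset G)
  (hA : 2 <= #|A|) (hSfin : finite_gset S) (He : S (gone G))
  (hS3 : at_least_3 S)
  (mu : pat A S -> A) (P : pat A S -> Prop) (f : {z : pat A S | P z} -> A)
  (hgen : generates He mu f) (hwb : well_behaved He f)
  (hcard : same_card_as_A A P) :
  (exists s : G, S s /\ s <> gone G /\
     forall g, mms mu g <-> (S g /\ g <> s)) \/
  (forall g, mms mu g <-> S g).
Proof.
have hP : forall z, P z <-> mu z <> z (exist S (gone G) He) := hgen.1.
have [a0 _] := card_gt0P (ltnW hA).
have dep_e : depends_on mu (gone G).
  have [s1 [s2 [S1 S2 n1 n2 n12]]] := at_least_3_avoid (gone G) hS3.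
  exact: (depends_on_gone hA hP hcard S1 S2 n1 n2 n12).
have [[s [Ss [ns nds]]] | all_dep] :=
  classic (exists s, S s /\ s <> gone G /\ ~ depends_on mu s).
- left; exists s; split=> //; split=> // g; rewrite (mmsE mu a0 hSfin); split.
    by move=> dg; split; [exact: depends_on_mem dg | move=> gs; apply: nds; rewrite -gs].
  case=> Sg ngs; have [-> // | nge] := classic (g = gone G).
  exact: (depends_on_other hA hP hcard Ss ns nds Sg nge ngs).
- right=> g; rewrite (mmsE mu a0 hSfin); split; first exact: depends_on_mem.
  move=> Sg; have [-> // | nge] := classic (g = gone G).
  by apply: NNPP => ndg; apply: all_dep; exists g.
Qed.
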